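(* Let $N\ge1$, $\gamma_1,\dots,\gamma_N>0$, and let $G$ be an $N\times N$ complex Hermitian matrix. Set $\Gamma=\mathrm{diag}(\gamma_1,\dots,\gamma_N,\gamma_1,\dots,\gamma_N)$, $$\mathcal{M}_{\mathrm{IME}}=\begin{pmatrix}\mathrm{Im}[G] & \mathrm{Re}[G]\\ -\mathrm{Re}[G] & -\mathrm{Im}[G]^{\mathrm T}\end{pmatrix},\qquad S_{\mathrm{IME}}(\omega)=\sqrt{2\Gamma}\,(\mathrm{i}\omega\mathbb{I}+\Gamma-\mathcal{M}_{\mathrm{IME}})^{-1}\sqrt{2\Gamma}-\mathbb{I},$$ and $L=\frac{1}{\sqrt2}\begin{pmatrix}I & I\\ -\mathrm{i}I & \mathrm{i}I\end{pmatrix}$, where $I$ and $\mathbb{I}$ are the $N\times N$ and $2N\times 2N$ identities. Then $\mathrm{i}\omega\mathbb{I}+\Gamma-\mathcal{M}_{\mathrm{IME}}$ is invertible for all $\omega\in\mathbb{R}$, and there is an $N\times N$ matrix-valued function $U_{\mathrm{IME}}(\omega)$ such that for all $\omega\in\mathbb{R}$ $$L^\dagger S_{\mathrm{IME}}(\omega)L=\begin{pmatrix}U_{\mathrm{IME}}(\omega) & 0\\ 0 & U_{\mathrm{IME}}(-\omega)^*\end{pmatrix},$$ and $U_{\mathrm{IME}}(\omega)$ is unitary for every $\omega\in\mathbb{R}$.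
   Context: $\mathrm{Re}$, $\mathrm{Im}$ are entrywise; ${}^*$ denotes entrywise complex conjugation and ${}^\dagger$ conjugate transpose; $\sqrt{2\Gamma}$ is the entrywise square root of the diagonal matrix $2\Gamma$. *)

From HB Require Import structures.
From mathcomp Require Import all_boot all_order all_algebra.
From mathcomp Require Import sesquilinear spectral.
From mathcomp Require Import complex.
Set Implicit Arguments. Unset Strict Implicit. Unset Printing Implicit Defensive.
Import Order.TTheory GRing.Theory Num.Theory.
Local Open Scope ring_scope.

Section IME.
Variables (R : rcfType) (N : nat).
Local Notation C := R[i].

Definition rC (x : R) : C := (x%:C)%C.

Definition ReM (G : 'M[C]_N) : 'M[C]_N := map_mx (fun z => 'Re z) G.
Definition ImM (G : 'M[C]_N) : 'M[C]_N := map_mx (fun z => 'Im z) G.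

Definition adj {m n} (A : 'M[C]_(m, n)) : 'M[C]_(n, m) := map_mx Num.conj (A ^T).

Definition M_IME (G : 'M[C]_N) : 'M[C]_(N + N) :=
  block_mx (ImM G) (ReM G) (- ReM G) (- (ImM G)^T).

Definition diagR (g : 'I_N -> R) : 'M[C]_N := diag_mx (\row_i rC (g i)).

Definition Gamma (g : 'I_N -> R) : 'M[C]_(N + N) :=
  block_mx (diagR g) 0 0 (diagR g).

Definition sqrt2Gamma (g : 'I_N -> R) : 'M[C]_(N + N) :=
  block_mx (diagR (fun i => Num.sqrt (2 * g i))) 0 0
           (diagR (fun i => Num.sqrt (2 * g i))).

Definition K_IME (g : 'I_N -> R) (G : 'M[C]_N) (w : R) : 'M[C]_(N + N) :=
  ('i * rC w)%:M + Gamma g - M_IME G.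

Definition S_IME (g : 'I_N -> R) (G : 'M[C]_N) (w : R) : 'M[C]_(N + N) :=
  sqrt2Gamma g *m invmx (K_IME g G w) *m sqrt2Gamma g - 1%:M.

Definition Lmx : 'M[C]_(N + N) :=
  (rC (Num.sqrt 2))^-1 *: block_mx 1%:M 1%:M (- 'i%:M) ('i%:M).

End IME.

From HB Require Import structures.
From mathcomp Require Import all_boot all_order all_algebra.
From mathcomp Require Import sesquilinear spectral complex.
From mathcomp Require Import ring.
Set Implicit Arguments. Unset Strict Implicit. Unset Printing Implicit Defensive.
Import Order.TTheory GRing.Theory Num.Theory.
Local Open Scope ring_scope.
Local Open Scope sesquilinear_scope.

(* In the basis L the drift iw + Gamma - M_IME of the input-output equations
   splits into the block K(w) = iw + Gamma_N + iG and its mirror image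
   conj K(-w), and sqrt(2 Gamma), being block-scalar, commutes with L.  Since G
   is Hermitian, the Hermitian part of K(w) is Gamma_N = D^2 / 2 with
   D = sqrt(2 Gamma_N) > 0.  This makes K(w) invertible and turns
   U(w) = D K(w)^-1 D - 1 into a Cayley transform: with X = D K^-1 D one has
   X X^dagger = X + X^dagger, i.e. U U^dagger = 1. *)

Section UnitaryCayley.
Variables (C : numClosedFieldType) (n : nat).
Implicit Types A B V : 'M[C]_n.

Lemma unitmx_hermpart_gram A B :
  B \in unitmx -> A + A^t* = B^t* *m B -> A \in unitmx.
Proof.
move=> Bu hAB; rewrite -row_free_unit -kermx_eq0; apply/eqP/row_matrixP => i.
set v := row i (kermx A); rewrite row0.
have vA : v *m A = 0 by rewrite -row_mul mulmx_ker row0.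
have vB : v *m B^t* = 0.
  apply/eqP; apply: contraT => /dotmx_is_dotmx; rewrite dotmxE trmx_mul map_mxM trmxCK.
  rewrite !mulmxA -[v *m B^t* *m B]mulmxA -hAB mulmxDr mulmxDl vA mul0mx add0r.
  by rewrite -mulmxA -map_mxM -trmx_mul vA trmx0 map_mx0 mulmx0 mxE ltxx.
by rewrite -[v]mulmx1 -(mulmxV (_ : B^t* \in unitmx)) ?mulmxA ?vB ?mul0mx // map_unitmx unitmx_tr.
Qed.

Lemma cayley_unitarymx A B :
  A \in unitmx -> A + A^t* = B^t* *m B -> B *m invmx A *m B^t* - 1%:M \is unitarymx.
Proof.
move=> Au hAB; apply/unitarymxP.
have A'u : A^t* \in unitmx by rewrite map_unitmx unitmx_tr.
set X := B *m invmx A *m B^t*.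
have XtE : X^t* = B *m invmx (A^t*) *m B^t*.
  by rewrite !trmx_mul !map_mxM trmxCK trmx_inv map_invmx mulmxA.
have XX : X *m X^t* = X + X^t*.
  rewrite XtE /X !mulmxA -[_ *m B^t* *m B]mulmxA -hAB mulmxDr !mulmxDl mulmxKV //.
  by rewrite mulmxK // addrC.
have -> : (X - 1%:M)^t* = X^t* - 1%:M by rewrite linearB /= map_mxB trmx1 map_mx1.
rewrite mulmxBl !mulmxBr XX mulmx1 mul1mx mulmx1.
by rewrite [X + _]addrC addrK opprB addrC subrK.
Qed.

Lemma invmx_unitary_conj A V :
  V \is unitarymx -> invmx (V^t* *m A *m V) = V^t* *m invmx A *m V.
Proof.
move=> /unitarymxP VV; have V'V := mulmx1C VV.
have [Au | Anu] := boolP (A \in unitmx).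
  have XY : V^t* *m A *m V *m (V^t* *m invmx A *m V) = 1%:M.
    by rewrite !mulmxA -[V^t* *m A *m V *m V^t*]mulmxA VV mulmx1 mulmxK // V'V.
  by rewrite -[RHS](mulKmx (proj1 (mulmx1_unit XY))) XY mulmx1.
have [V'u Vu] := mulmx1_unit V'V.
by rewrite !invmx_out // inE !unitmx_mul V'u Vu andbT.
Qed.

Lemma unitary_conj_mul V A B :
  V \is unitarymx -> V^t* *m (A *m B) *m V = (V^t* *m A *m V) *m (V^t* *m B *m V).
Proof. by move=> Vu; rewrite !mulmxA mulmxtVK. Qed.
End UnitaryCayley.

Section Lmatrix.
Variables (R : rcfType) (N : nat).
Local Notation C := R[i].
Local Notation L := (Lmx R N).
Implicit Types A B D E : 'M[C]_N.

Lemma mulCii : 'i * 'i = -1 :> C.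
Proof. by rewrite -expr2 sqrCi. Qed.

Lemma conj_rC (x : R) : Num.conj (rC x) = rC x.
Proof. exact: conjc_real. Qed.

Lemma trmxC_Lmx :
  L^t* = (rC (Num.sqrt 2))^-1 *: block_mx 1%:M ('i%:M) 1%:M (- 'i%:M).
Proof.
rewrite /Lmx linearZ /= map_mxZ fmorphV; congr (_ *: _).
  by congr (_^-1); exact: conj_rC.
rewrite tr_block_mx map_block_mx !tr_scalar_mx ?linearN /= ?tr_scalar_mx.
by rewrite !map_mxN !map_scalar_mx /= conjCi conjC1 raddfN opprK.
Qed.

Lemma Lmx_conj_block A B D E :
  L^t* *m block_mx A B D E *m L =
  2^-1 *: block_mx (A + E + 'i *: (D - B)) (A - E + 'i *: (D + B))
                   (A - E - 'i *: (D + B)) (A + E - 'i *: (D - B)).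
Proof.
have c2 : (rC (Num.sqrt 2))^-1 * (rC (Num.sqrt 2))^-1 = 2^-1 :> C.
  by rewrite -invfM /rC -rmorphM -expr2 sqr_sqrtr ?ler0n // rmorph_nat.
rewrite trmxC_Lmx /Lmx -!scalemxAl -scalemxAr scalerA c2; congr (_ *: _).
have -> : block_mx 1%:M ('i%:M) 1%:M (- 'i%:M) *m block_mx A B D E =
    block_mx (A + 'i *: D) (B + 'i *: E) (A - 'i *: D) (B - 'i *: E).
  by rewrite mulmx_block !mul1mx !mulNmx !mul_scalar_mx.
rewrite mulmx_block !mulmx1 !mulmxN !mul_mx_scalar.
apply/matrixP => i j; rewrite !mxE.
by case: (split i) => i'; rewrite !mxE; case: (split j) => j'; rewrite !mxE; ring: mulCii.
Qed.

Lemma Lmx_conj_blockdiag D : L^t* *m block_mx D 0 0 D *m L = block_mx D 0 0 D.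
Proof.
have half : 2^-1 *: (D + D) = D.
  by rewrite scalerDr -scalerDl -mulr2n -[2^-1 *+ 2]mulr_natl mulfV ?scale1r ?pnatr_eq0.
rewrite Lmx_conj_block !subrr !(addr0, add0r, scaler0, subr0, oppr0).
by rewrite scale_block_mx !scaler0 half.
Qed.

Lemma Lmx_unitary : L \is unitarymx.
Proof.
apply/unitarymxP/mulmx1C.
by have := Lmx_conj_blockdiag 1%:M; rewrite -scalar_mx_block mulmx1.
Qed.

End Lmatrix.

Section IME.
Variables (R : rcfType) (N : nat) (g : 'I_N -> R) (G : 'M[R[i]]_N).
Hypotheses (g_gt0 : forall i, 0 < g i) (G_herm : G \is hermsymmx).
Local Notation C := R[i].
Local Notation L := (Lmx R N).

Lemma hermsymmx_conj i j : G j i = Num.conj (G i j).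
Proof.
by have /is_hermitianmxP /(congr1 (fun M : 'M[C]_N => M j i)) := G_herm;
  rewrite expr0 scale1r !mxE.
Qed.

Definition K_red (w : R) : 'M[C]_N := ('i * rC w)%:M + diagR g + 'i *: G.

Lemma Lmx_conj_K_IME w :
  L^t* *m K_IME g G w *m L = block_mx (K_red w) 0 0 (map_mx Num.conj (K_red (- w))).
Proof.
rewrite /K_IME /Gamma /M_IME (scalar_mx_block N N) !(add_block_mx, opp_block_mx).
rewrite Lmx_conj_block scale_block_mx.
apply/matrixP => i j; rewrite !mxE.
case: (split i) => a; rewrite !mxE; case: (split j) => b; rewrite !mxE;
  rewrite (hermsymmx_conj a b) Im_conj ?(rmorphD, rmorphMn, rmorphM) /=;
  by rewrite ?conjCi ?conj_rC /rC ?rmorphN /= ?ReE ?ImE; field.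
Qed.

Definition sqrt2Gamma_blk : 'M[C]_N := diagR (fun i => Num.sqrt (2 * g i)).

Lemma conj_sqrt2Gamma_blk : map_mx Num.conj sqrt2Gamma_blk = sqrt2Gamma_blk.
Proof. by apply/matrixP => i j; rewrite !mxE rmorphMn /= conj_rC. Qed.

Lemma trmxC_sqrt2Gamma_blk : sqrt2Gamma_blk^t* = sqrt2Gamma_blk.
Proof. by rewrite /sqrt2Gamma_blk /diagR tr_diag_mx -/(diagR _) conj_sqrt2Gamma_blk. Qed.

Lemma sqrt2Gamma_blk_unit : sqrt2Gamma_blk \in unitmx.
Proof.
rewrite unitmxE det_diag unitfE; apply/prodf_neq0 => i _.
by rewrite mxE /rC fmorph_eq0 sqrtr_eq0 -ltNge mulr_gt0 ?ltr0n.
Qed.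

Lemma K_red_hermpart w : K_red w + (K_red w)^t* = sqrt2Gamma_blk^t* *m sqrt2Gamma_blk.
Proof.
rewrite trmxC_sqrt2Gamma_blk /sqrt2Gamma_blk /diagR mulmx_diag; apply/matrixP => i j.
rewrite !mxE !(rmorphD, rmorphMn, rmorphM) /= conjCi !conj_rC -hermsymmx_conj.
have sqrt2g : rC (Num.sqrt (2 * g i)) * rC (Num.sqrt (2 * g i)) = 2 * rC (g i).
  by rewrite /rC -rmorphM -expr2 sqr_sqrtr ?mulr_ge0 ?ltW // rmorphM rmorph_nat.
by case: (eqVneq i j) => [<-|_]; rewrite ?mulr1n ?mulr0n ?sqrt2g; ring.
Qed.

Lemma K_red_unit w : K_red w \in unitmx.
Proof. exact: unitmx_hermpart_gram sqrt2Gamma_blk_unit (K_red_hermpart w). Qed.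

Definition U_IME (w : R) : 'M[C]_N := sqrt2Gamma_blk *m invmx (K_red w) *m sqrt2Gamma_blk - 1%:M.

Lemma U_IME_unitary w : U_IME w \is unitarymx.
Proof.
have := cayley_unitarymx (K_red_unit w) (K_red_hermpart w).
by rewrite trmxC_sqrt2Gamma_blk.
Qed.

Lemma K_IME_unit w : K_IME g G w \in unitmx.
Proof.
have : L^t* *m K_IME g G w *m L \in unitmx.
  rewrite Lmx_conj_K_IME unitmxE det_ublock unitrM -!unitmxE K_red_unit.
  by rewrite map_unitmx K_red_unit.
by rewrite !unitmx_mul => /andP [/andP [_ ->]].
Qed.

Lemma Lmx_conj_S_IME w :
  L^t* *m S_IME g G w *m L = block_mx (U_IME w) 0 0 (map_mx Num.conj (U_IME (- w))).
Proof.
have /unitarymxP /mulmx1C L'L := Lmx_unitary R N.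
set S := sqrt2Gamma g; set K := K_IME g G w.
have S_conj : L^t* *m S *m L = S by exact: Lmx_conj_blockdiag.
have Kinv_conj : L^t* *m invmx K *m L =
    block_mx (invmx (K_red w)) 0 0 (invmx (map_mx Num.conj (K_red (- w)))).
  rewrite -invmx_unitary_conj ?Lmx_unitary // Lmx_conj_K_IME invmx_block_diag //.
  by rewrite -Lmx_conj_K_IME !unitmx_mul K_IME_unit (mulmx1_unit L'L).1 (mulmx1_unit L'L).2.
rewrite /S_IME mulmxBr mulmxBl mulmx1 L'L -/S -/K !unitary_conj_mul ?Lmx_unitary //.
rewrite S_conj Kinv_conj /S /sqrt2Gamma -/sqrt2Gamma_blk !mulmx_block.
rewrite !(mulmx0, mul0mx, addr0, add0r) (scalar_mx_block N N) opp_block_mx.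
rewrite add_block_mx oppr0 !addr0.
by rewrite /U_IME map_mxB !map_mxM map_invmx conj_sqrt2Gamma_blk map_mx1.
Qed.
End IME.

Theorem mainTheorem4 (R : rcfType) (N : nat) (HN : (0 < N)%N)
  (g : 'I_N -> R) (Hg : forall i, 0 < g i) (G : 'M[R[i]]_N)
  (HG : G \is hermsymmx) :
  (forall w : R, K_IME g G w \in unitmx) /\
  exists U : R -> 'M[R[i]]_N,
    forall w : R,
      adj (Lmx R N) *m S_IME g G w *m Lmx R N
        = block_mx (U w) 0 0 (map_mx Num.conj (U (- w)))
      /\ U w \is unitarymx.
Proof.
split; first exact: K_IME_unit Hg HG.
exists (U_IME g G) => w; split; first exact: Lmx_conj_S_IME Hg HG w.
exact: U_IME_unitary Hg HG w.
Qed.
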